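(* Let $n_2,n_3\ge 2$, $n=1+n_2+n_3$, and consider the Stiefel manifold $V_{1+n_2}\mathbb R^n=\mathrm{SO}(n)/\mathrm{SO}(n_3)$, with $\mathrm{SO}(n_3)$ acting on the last $n_3$ coordinates. Let $I_1=\{1\}$, $I_2=\{2,\dots,1+n_2\}$, $I_3=\{2+n_2,\dots,n\}$, and decompose $\mathfrak m=\mathfrak{so}(n_2)\oplus\mathfrak m_{12}\oplus\mathfrak m_{13}\oplus\mathfrak m_{23}$, where $\mathfrak{so}(n_2)=\mathrm{span}\{\xi_{ab}:a<b,\ a,b\in I_2\}$ and $\mathfrak m_{ij}=\mathrm{span}\{\xi_{ab}:a\in I_i,b\in I_j\}$. Consider the family of metrics $\Lambda=\lambda_2\mathrm{Id}_{\mathfrak{so}(n_2)}+\lambda_{12}\mathrm{Id}_{\mathfrak m_{12}}+\lambda_{13}\mathrm{Id}_{\mathfrak m_{13}}+\lambda_{23}\mathrm{Id}_{\mathfrak m_{23}}$ with all $\lambda$'s positive. For $X=X_{\mathfrak{so}(n_2)}+X_{\mathfrak m_{12}}+X_{\mathfrak m_{13}}+X_{\mathfrak m_{23}}\in\mathfrak m$ (components in the respective summands), $X$ is an equigeodesic vector for this family if and only if $$[X_{\mathfrak{so}(n_2)},X_{\mathfrak m_{12}}]=0,\ [X_{\mathfrak{so}(n_2)},X_{\mathfrak m_{23}}]=0,\ [X_{\mathfrak m_{12}},X_{\mathfrak m_{13}}]_{\mathfrak m}=0,\ [X_{\mathfrak m_{12}},X_{\mathfrak m_{23}}]_{\mathfrak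 m}=0,\ [X_{\mathfrak m_{13}},X_{\mathfrak m_{23}}]_{\mathfrak m}=0.$$
   Context: $E_{ab}$ is the $n\times n$ matrix with $1$ in entry $(a,b)$ and $0$ elsewhere; $\xi_{ab}=E_{ab}-E_{ba}$. $\mathfrak m$ is the orthogonal complement of $\mathfrak{so}(n_3)$ in $\mathfrak{so}(n)$ with respect to the negative of the Killing form; $[\cdot,\cdot]_{\mathfrak m}$ is the $\mathfrak m$-component of the bracket. A nonzero $X\in\mathfrak m$ is an equigeodesic vector (for a given family of $B$-symmetric positive operators $\Lambda$ on $\mathfrak m$) if $[X,\Lambda X]_{\mathfrak m}=0$ for every $\Lambda$ in the family. *)

From HB Require Import structures.
From mathcomp Require Import all_boot all_order all_algebra.
Set Implicit Arguments. Unset Strict Implicit. Unset Printing Implicit Defensive.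
Import Order.TTheory GRing.Theory Num.Theory.
Local Open Scope ring_scope.

(* Stiefel manifold V_{1+n2} R^n = SO(n)/SO(n3), n = 1 + n2 + n3.
   Indices are 0-based: index 0 is I_1, indices 1..n2 form I_2,
   indices n2+1 .. n2+n3 form I_3. *)

Definition cls (n2 : nat) (a : nat) : nat :=
  if a == 0%N then 1%N else if (a <= n2)%N then 2%N else 3%N.

Section Defs.
Variables (R : realFieldType) (n2 n3 : nat).
Notation N := (1 + n2 + n3)%N.
Notation M := 'M[R]_N.

Definition lbr (A B : M) : M := A *m B - B *m A.

Definition in_so (X : M) : Prop := X^T = - X.

(* m = orthogonal complement (w.r.t. -Killing form) of so(n3) (block I3 x I3) *)
Definition in_m (X : M) : Prop :=
  in_so X /\ forall a b : 'I_N, cls n2 a = 3%N -> cls n2 b = 3%N -> X a b = 0.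

Definition projm (X : M) : M :=
  \matrix_(a, b) if (cls n2 a == 3%N) && (cls n2 b == 3%N) then 0 else X a b.

(* component of X in the block spanned by xi_{ab}, a in I_i, b in I_j
   (i.e. entries (I_i x I_j) and (I_j x I_i)) *)
Definition blk (i j : nat) (X : M) : M :=
  \matrix_(a, b) if ((cls n2 a == i) && (cls n2 b == j))
                    || ((cls n2 a == j) && (cls n2 b == i)) then X a b else 0.

Definition Xso2 (X : M) : M := blk 2 2 X.
Definition X12 (X : M) : M := blk 1 2 X.
Definition X13 (X : M) : M := blk 1 3 X.
Definition X23 (X : M) : M := blk 2 3 X.

Definition Lam (l2 l12 l13 l23 : R) (X : M) : M :=
  l2 *: Xso2 X + l12 *: X12 X + l13 *: X13 X + l23 *: X23 X.

Definition equigeodesic (X : M) : Prop :=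
  in_m X /\ X != 0 /\
  forall l2 l12 l13 l23 : R, 0 < l2 -> 0 < l12 -> 0 < l13 -> 0 < l23 ->
    projm (lbr X (Lam l2 l12 l13 l23 X)) = 0.

End Defs.

Arguments in_m {R} n2 {n3} X.
Arguments projm {R} n2 {n3} X.
Arguments blk {R} n2 {n3} i j X.
Arguments Xso2 {R} n2 {n3} X.
Arguments X12 {R} n2 {n3} X.
Arguments X13 {R} n2 {n3} X.
Arguments X23 {R} n2 {n3} X.
Arguments Lam {R} n2 {n3} l2 l12 l13 l23 X.
Arguments equigeodesic {R} n2 {n3} X.

From mathcomp Require Import all_boot all_order all_algebra.
Set Implicit Arguments. Unset Strict Implicit. Unset Printing Implicit Defensive.
Import Order.TTheory GRing.Theory Num.Theory.
Local Open Scope ring_scope.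

(* Write X = A + B + C + D for the components of X in so(n2), m12, m13, m23.
   Every matrix we meet is supported on a union of "class blocks" I_p x I_q
   (p, q in {1,2,3}), and the block support of a product P *m Q is read off
   from a finite table on classes.  This gives:
   - [A,C] = 0, and [A,B], [C,D] lie in m12, [B,D] in m13, [A,D], [B,C] in
     m23; in particular none of these brackets meets the so(n3) block, so the
     m-projection does not change them;
   - by bilinearity, [X, Lambda X]_m = l2 [X,A] + l12 [X,B] + l13 [X,C]
     + l23 [X,D], where [X,A], ..., [X,D] are explicit sums of the five
     brackets above.
   Since the parameters range over all positive reals, X is equigeodesic iff
   the four coefficient matrices vanish; as the five brackets have pairwise
   disjoint supports where they are added, this is equivalent to the
   vanishing of the five brackets, which is the theorem (the argument does
   not need n2, n3 >= 2). *)

Section PositiveCombinations.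
Variables (R : realFieldType) (V : lmodType R).

(* if l p + t = 0 for all l > 0, then comparing l = 2 with l = 1 gives p = 0 *)
Lemma pos_scale_add_eq0 (p t : V) :
  (forall l : R, 0 < l -> l *: p + t = 0) -> p = 0.
Proof.
move=> eq0; have := eq0 1 ltr01; rewrite scale1r => eq1.
have := eq0 (1 + 1) (addr_gt0 ltr01 ltr01).
by rewrite scalerDl scale1r -addrA eq1 addr0.
Qed.

(* a combination with arbitrary positive coefficients vanishes only if each
   vector does: vary one coefficient while the others stay equal to 1 *)
Lemma pos_comb4_eq0 (p q r s : V) :
  (forall l2 l12 l13 l23 : R, 0 < l2 -> 0 < l12 -> 0 < l13 -> 0 < l23 ->
    l2 *: p + l12 *: q + l13 *: r + l23 *: s = 0) ->
  [/\ p = 0, q = 0, r = 0 & s = 0].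
Proof.
move=> H; split.
- apply: (@pos_scale_add_eq0 _ (q + r + s)) => l hl.
  by rewrite -(H l 1 1 1) ?ltr01 // !scale1r !addrA.
- apply: (@pos_scale_add_eq0 _ (p + r + s)) => l hl.
  by rewrite -(H 1 l 1 1) ?ltr01 // !scale1r !addrA (addrC (l *: q)).
- apply: (@pos_scale_add_eq0 _ (p + q + s)) => l hl.
  by rewrite -(H 1 1 l 1) ?ltr01 // !scale1r addrC addrAC.
- apply: (@pos_scale_add_eq0 _ (p + q + r)) => l hl.
  by rewrite -(H 1 1 1 l) ?ltr01 // !scale1r addrC.
Qed.

End PositiveCombinations.

(* An index a has class cls n2 a in {1,2,3}; a pattern is a
   relation on classes, and a matrix is supported on a pattern when it
   vanishes at every entry whose pair of classes is outside the pattern. *)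
Definition classes : seq nat := [:: 1; 2; 3]%N.

Definition pattern := nat -> nat -> bool.

Definition block_pat (i j : nat) : pattern :=
  fun p q => ((p == i) && (q == j)) || ((p == j) && (q == i)).

Definition mul_pat_ok (s t u : pattern) : bool :=
  all (fun p => all (fun r => all (fun q => s p r && t r q ==> u p q)
    classes) classes) classes.

Definition lbr_pat_ok (s t u : pattern) : bool :=
  mul_pat_ok s t u && mul_pat_ok t s u.

Definition disjoint_pat (s t : pattern) : bool :=
  all (fun p => all (fun q => ~~ (s p q && t p q)) classes) classes.

Lemma cls_in (n2 a : nat) : cls n2 a \in classes.
Proof. by rewrite /cls; case: eqP => // _; case: leqP. Qed.

Lemma cls_eq1 (n2 a : nat) : cls n2 a = 1%N -> a = 0%N.
Proof. by rewrite /cls; case: eqP => // _; case: leqP. Qed.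

Section BlockSupport.
Variables (R : realFieldType) (n2 n3 : nat).
Local Notation N := (1 + n2 + n3)%N.
Local Notation M := 'M[R]_N.

Definition supp (s : pattern) (Y : M) : Prop :=
  forall a b : 'I_N, ~~ s (cls n2 a) (cls n2 b) -> Y a b = 0.

Lemma blk_supp (i j : nat) (Y : M) : supp (block_pat i j) (blk n2 i j Y).
Proof. by move=> a b; rewrite mxE /block_pat => /negbTE ->. Qed.

(* (P *m Q) a b = \sum_c P a c * Q c b, and the table kills every term *)
Lemma mul_supp (s t u : pattern) (P Q : M) :
  supp s P -> supp t Q -> mul_pat_ok s t u -> supp u (P *m Q).
Proof.
move=> sP tQ /allP/(_ _ (cls_in n2 _)) ok a b nu; rewrite mxE big1 // => c _.
have /allP/(_ _ (cls_in n2 c))/allP/(_ _ (cls_in n2 b)) := ok a.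
case: (boolP (s _ _)) => [sac | /sP -> ]; last by rewrite mul0r.
by case: (boolP (t _ _)) => [tcb | /tQ ->]; rewrite ?mulr0 //= (negbTE nu).
Qed.

Lemma lbr_supp (s t u : pattern) (P Q : M) :
  supp s P -> supp t Q -> lbr_pat_ok s t u -> supp u (lbr P Q).
Proof.
move=> sP tQ /andP[st ts] a b nu.
by rewrite mxE (mul_supp sP tQ st) // mxE (mul_supp tQ sP ts) // oppr0 addr0.
Qed.

Lemma lbr_blk_supp (i j k l : nat) (u : pattern) (Y Z : M) :
  lbr_pat_ok (block_pat i j) (block_pat k l) u ->
  supp u (lbr (blk n2 i j Y) (blk n2 k l Z)).
Proof. by move=> ok; apply: lbr_supp ok; apply: blk_supp. Qed.

Lemma add_disjoint_eq0 (s t : pattern) (P Q : M) :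
  supp s P -> supp t Q -> disjoint_pat s t -> P + Q = 0 -> P = 0 /\ Q = 0.
Proof.
move=> sP tQ /allP st PQ.
suff P0 : P = 0 by split=> //; move: PQ; rewrite P0 add0r.
apply/matrixP => a b; have := congr1 (fun Y : M => Y a b) PQ; rewrite !mxE.
have /allP/(_ _ (cls_in n2 b)) := st _ (cls_in n2 a).
by case: (boolP (s _ _)) => [_ /= /tQ -> | /sP ->]; rewrite ?addr0.
Qed.

Lemma projm_supp (s : pattern) (P : M) : supp s P -> ~~ s 3 3 -> projm n2 P = P.
Proof.
move=> sP s33; apply/matrixP => a b; rewrite mxE.
by case: ifP => // /andP[/eqP ea /eqP eb]; rewrite sP // ea eb.
Qed.

End BlockSupport.

Arguments supp {R} n2 {n3} s Y.

Section Stiefel.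
Variables (R : realFieldType) (n2 n3 : nat).
Local Notation N := (1 + n2 + n3)%N.
Local Notation M := 'M[R]_N.

Lemma lbrDl (P Q Y : M) : lbr (P + Q) Y = lbr P Y + lbr Q Y.
Proof. by rewrite /lbr mulmxDl mulmxDr opprD addrACA. Qed.

Lemma lbrDr (P Q Y : M) : lbr Y (P + Q) = lbr Y P + lbr Y Q.
Proof. by rewrite /lbr mulmxDl mulmxDr opprD addrACA. Qed.

Lemma lbrZr (k : R) (P Q : M) : lbr P (k *: Q) = k *: lbr P Q.
Proof. by rewrite /lbr -scalemxAr -scalemxAl scalerBr. Qed.

Lemma lbrC (P Q : M) : lbr P Q = - lbr Q P.
Proof. by rewrite /lbr opprB. Qed.

Lemma lbrxx (P : M) : lbr P P = 0.
Proof. exact: subrr. Qed.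

Lemma projmD (P Q : M) : projm n2 (P + Q) = projm n2 P + projm n2 Q.
Proof. by apply/matrixP => a b; rewrite !mxE; case: ifP; rewrite ?addr0. Qed.

Lemma projmN (P : M) : projm n2 (- P) = - projm n2 P.
Proof. by apply/matrixP => a b; rewrite !mxE; case: ifP; rewrite ?oppr0. Qed.

Lemma projmZ (k : R) (P : M) : projm n2 (k *: P) = k *: projm n2 P.
Proof. by apply/matrixP => a b; rewrite !mxE; case: ifP; rewrite ?mulr0. Qed.

Lemma lbr_Lam (l2 l12 l13 l23 : R) (X : M) :
  lbr X (Lam n2 l2 l12 l13 l23 X) =
  l2 *: lbr X (Xso2 n2 X) + l12 *: lbr X (X12 n2 X) +
  l13 *: lbr X (X13 n2 X) + l23 *: lbr X (X23 n2 X).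
Proof. by rewrite /Lam !lbrDr !lbrZr. Qed.

(* every X in m is the sum of its four components: the diagonal entry of
   I_1 = {0} vanishes by skew-symmetry and the I_3 x I_3 block by definition
   of m, while every other entry lies in exactly one component block *)
Lemma component_decomposition (X : M) : in_m n2 X ->
  X = Xso2 n2 X + X12 n2 X + X13 n2 X + X23 n2 X.
Proof.
move=> [skew I33]; apply/matrixP => a b; rewrite !mxE.
have: cls n2 a \in classes := cls_in n2 a; have: cls n2 b \in classes := cls_in n2 b.
rewrite !inE => /or3P[]/eqP eb /or3P[]/eqP ea; rewrite ea eb /= ?add0r ?addr0 //.
- have -> : b = a by apply: val_inj; rewrite /= (cls_eq1 ea) (cls_eq1 eb).
  have /eqP := congr1 (fun Y : M => Y a a) skew.
  by rewrite !mxE -addr_eq0 -mulr2n mulrn_eq0 => /eqP.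
- exact: I33.
Qed.

Section Components.
Variable X : M.
Hypothesis X_in_m : in_m n2 X.
Local Notation A := (Xso2 n2 X).
Local Notation B := (X12 n2 X).
Local Notation C := (X13 n2 X).
Local Notation D := (X23 n2 X).

Lemma lbr_AC : lbr A C = 0.
Proof.
have AC : supp n2 (fun _ _ => false) (lbr A C).
  exact: lbr_blk_supp.
by apply/matrixP => a b; rewrite [RHS]mxE; apply: AC.
Qed.

Lemma supp_AB : supp n2 (block_pat 1 2) (lbr A B).
Proof. exact: lbr_blk_supp. Qed.

Lemma supp_AD : supp n2 (block_pat 2 3) (lbr A D).
Proof. exact: lbr_blk_supp. Qed.

Lemma supp_BC : supp n2 (block_pat 2 3) (lbr B C).
Proof. exact: lbr_blk_supp. Qed.

Lemma supp_BD : supp n2 (block_pat 1 3) (lbr B D).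
Proof. exact: lbr_blk_supp. Qed.

Lemma supp_CD : supp n2 (block_pat 1 2) (lbr C D).
Proof. exact: lbr_blk_supp. Qed.

Lemma lbr_XA : lbr X A = - (lbr A B + lbr A D).
Proof.
rewrite {1}(component_decomposition X_in_m) !lbrDl lbrxx.
by rewrite (lbrC B) (lbrC C) (lbrC D) lbr_AC oppr0 add0r addr0 [RHS]opprD.
Qed.

Lemma lbr_XB : lbr X B = lbr A B - (lbr B C + lbr B D).
Proof.
rewrite {1}(component_decomposition X_in_m) !lbrDl lbrxx.
by rewrite (lbrC C) (lbrC D) addr0 [in RHS]opprD addrA.
Qed.

Lemma lbr_XC : lbr X C = lbr B C - lbr C D.
Proof.
rewrite {1}(component_decomposition X_in_m) !lbrDl lbrxx.
by rewrite lbr_AC (lbrC D) add0r addr0.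
Qed.

Lemma lbr_XD : lbr X D = lbr A D + lbr B D + lbr C D.
Proof. by rewrite {1}(component_decomposition X_in_m) !lbrDl lbrxx addr0. Qed.

Lemma projm_AB : projm n2 (lbr A B) = lbr A B.
Proof. exact: projm_supp supp_AB _. Qed.

Lemma projm_AD : projm n2 (lbr A D) = lbr A D.
Proof. exact: projm_supp supp_AD _. Qed.

Lemma projm_BC : projm n2 (lbr B C) = lbr B C.
Proof. exact: projm_supp supp_BC _. Qed.

Lemma projm_BD : projm n2 (lbr B D) = lbr B D.
Proof. exact: projm_supp supp_BD _. Qed.

Lemma projm_CD : projm n2 (lbr C D) = lbr C D.
Proof. exact: projm_supp supp_CD _. Qed.

Lemma projm_lbr_Lam (l2 l12 l13 l23 : R) :
  projm n2 (lbr X (Lam n2 l2 l12 l13 l23 X)) =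
  l2 *: - (lbr A B + lbr A D) + l12 *: (lbr A B - (lbr B C + lbr B D)) +
  l13 *: (lbr B C - lbr C D) + l23 *: (lbr A D + lbr B D + lbr C D).
Proof.
rewrite lbr_Lam lbr_XA lbr_XB lbr_XC lbr_XD.
(* abstract the brackets so that the linearity of projm stops at them *)
move: projm_AB projm_AD projm_BC projm_BD projm_CD.
move: (lbr A B) (lbr A D) (lbr B C) (lbr B D) (lbr C D).
move=> AB AD BC BD CD pAB pAD pBC pBD pCD.
by rewrite !(projmD, projmN, projmZ) pAB pAD pBC pBD pCD.
Qed.

Lemma equigeodesic_coefficients : X != 0 ->
  equigeodesic n2 X <->
  [/\ - (lbr A B + lbr A D) = 0, lbr A B - (lbr B C + lbr B D) = 0,
      lbr B C - lbr C D = 0 & lbr A D + lbr B D + lbr C D = 0].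
Proof.
move=> X0; split.
- move=> [_ [_ eq0]]; apply: pos_comb4_eq0 => l2 l12 l13 l23 *.
  by rewrite -projm_lbr_Lam eq0.
- move=> [eA eB eC eD]; split=> //; split=> // l2 l12 l13 l23 *.
  by rewrite projm_lbr_Lam eA eB eC eD !scaler0 !addr0.
Qed.

(* the coefficient system is triangular, and in each equation the brackets
   that are added have disjoint block supports *)
Lemma coefficients_eq0 :
  [/\ - (lbr A B + lbr A D) = 0, lbr A B - (lbr B C + lbr B D) = 0,
      lbr B C - lbr C D = 0 & lbr A D + lbr B D + lbr C D = 0] <->
  [/\ lbr A B = 0, lbr A D = 0, lbr B C = 0, lbr B D = 0 & lbr C D = 0].
Proof.
split; last by case=> -> -> -> -> ->; rewrite !(addr0, subr0, oppr0).
move=> [/eqP eA eB eC _]; move: eA; rewrite oppr_eq0 => /eqP eA.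
have [AB0 AD0] := add_disjoint_eq0 supp_AB supp_AD isT eA.
move: eB; rewrite AB0 sub0r => /eqP; rewrite oppr_eq0 => /eqP eB.
have [BC0 BD0] := add_disjoint_eq0 supp_BC supp_BD isT eB.
move: eC; rewrite BC0 sub0r => /eqP; rewrite oppr_eq0 => /eqP CD0.
by split.
Qed.

End Components.

End Stiefel.

(* the m-projections in the statement act trivially, so the conditions are
   exactly the vanishing of the five brackets *)
Theorem mainTheorem6 (R : realFieldType) (n2 n3 : nat)
  (hn2 : (2 <= n2)%N) (hn3 : (2 <= n3)%N) (X : 'M[R]_(1 + n2 + n3)) :
  in_m n2 X -> X != 0 ->
  (equigeodesic n2 X <->
    [/\ lbr (Xso2 n2 X) (X12 n2 X) = 0,
        lbr (Xso2 n2 X) (X23 n2 X) = 0,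
        projm n2 (lbr (X12 n2 X) (X13 n2 X)) = 0,
        projm n2 (lbr (X12 n2 X) (X23 n2 X)) = 0 &
        projm n2 (lbr (X13 n2 X) (X23 n2 X)) = 0]).
Proof.
move=> X_in_m X0.
rewrite (projm_BC X) (projm_BD X) (projm_CD X).
exact: iff_trans (equigeodesic_coefficients X_in_m X0) (coefficients_eq0 X).
Qed.
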